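(* Let $0\to P\to B\to R\to0$ be a short exact sequence of finite-length $\Bbbk[N]$-modules, and let $\lambda,\mu,\nu$ be the Jordan types of $N$ acting on $P$, $B$, $R$ respectively. (1) $\mu\ge\lambda+\nu$ in dominance order, where $\lambda+\nu$ is the partition whose multiset of parts is the union of the parts of $\lambda$ and of $\nu$. (2) If moreover $\lambda$ and $\mu$ are $t$-interlaced for some $t\in\mathbb Z$, then $\nu$ is not strictly greater than $\operatorname{diff}(\mu,\lambda)$ in dominance order.
   Context: A finite-length $\Bbbk[N]$-module is a finite-dimensional vector space with a nilpotent operator $N$; its Jordan type is the partition of block sizes. Dominance order: $\gamma\le\kappa$ if $\gamma_1+\dots+\gamma_k\le\kappa_1+\dots+\kappa_k$ for all $k$ (parts padded with zeros). For $t\ge0$, $\lambda,\mu$ are $t$-interlaced if $\mu_1\ge\dots\ge\mu_{t+1}\ge\lambda_1\ge\mu_{t+2}\ge\mu_{t+3}\ge\lambda_2\ge\mu_{t+4}\ge\mu_{t+5}\ge\lambda_3\ge\cdots$ (all partitions padded with infinitely many zeros), and then $\operatorname{diff}(\mu,\lambda)=(\mu_1,\dots,\mu_t,\mu_{t+1}+\mu_{t+2}-\lambda_1,\mu_{t+3}+\mu_{t+4}-\lambda_2,\dots)$. For $t\le0$, they are $t$-interlaced if $\lambda_i=\mu_i$ for $i\le-t$ and $\mu_{-t+1}\ge\lambda_{-t+1}\ge\mu_{-t+2}\ge\mu_{-t+3}\ge\lambda_{-t+2}\ge\mu_{-t+4}\ge\mu_{-t+5}\ge\lambda_{-t+3}\ge\cdots$,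 and then $\operatorname{diff}(\mu,\lambda)=(\mu_{-t+1}+\mu_{-t+2}-\lambda_{-t+1},\mu_{-t+3}+\mu_{-t+4}-\lambda_{-t+2},\dots)$. *)

From mathcomp Require Import all_boot all_order all_algebra.
Set Implicit Arguments. Unset Strict Implicit. Unset Printing Implicit Defensive.
Import GRing.Theory.
Local Open Scope ring_scope.

Definition is_partition (s : seq nat) : bool :=
  sorted geq s && all (fun x => 0 < x)%N s.

Definition parts (s : seq nat) : nat -> nat := fun i => nth 0%N s i.

(* 1-based access: part s i = s_i for i >= 1. *)
Definition part1 (s : seq nat) (i : nat) : nat := nth 0%N s i.-1.

(* Block boundaries: partial sums s_1, s_1+s_2, ... *)
Fixpoint psums (acc : nat) (s : seq nat) : seq nat :=
  if s is x :: s' then (acc + x)%N :: psums (acc + x)%N s' else [::].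

(* The nilpotent Jordan matrix with consecutive Jordan blocks of sizes s
   (row-vector convention: e_i N = e_(i+1) inside a block, e_last N = 0). *)
Definition jordan_nil (K : fieldType) (n : nat) (s : seq nat) : 'M[K]_n :=
  \matrix_(i < n, j < n)
     (((j : nat) == i.+1) && ((j : nat) \notin psums 0 s))%:R.

Definition nilpotent_mx (K : fieldType) (n : nat) (N : 'M[K]_n) : Prop :=
  exists k : nat, N ^+ k = 0.

Definition jordan_type (K : fieldType) (n : nat) (N : 'M[K]_n) (lam : seq nat)
  : Prop :=
  is_partition lam /\ sumn lam = n /\
  exists S : 'M[K]_n, S \in unitmx /\ S *m N *m invmx S = @jordan_nil K n lam.

Definition dominated (a b : nat -> nat) : Prop :=
  forall k : nat, (\sum_(i < k) a i <= \sum_(i < k) b i)%N.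

Definition strictly_dominated (a b : nat -> nat) : Prop :=
  dominated a b /\ exists i, a i != b i.

Definition part_union (lam nu : seq nat) : seq nat := sort geq (lam ++ nu).

(* t-interlacing for t = n >= 0 (1-based indices). *)
Definition interlaced_pos (n : nat) (lam mu : seq nat) : Prop :=
  (forall i, (1 <= i <= n)%N -> (part1 mu i >= part1 mu i.+1)%N) /\
  (forall j, (1 <= j)%N ->
     [/\ (part1 mu (n + 2 * j).-1 >= part1 lam j)%N,
         (part1 lam j >= part1 mu (n + 2 * j))%N &
         (part1 mu (n + 2 * j) >= part1 mu (n + 2 * j).+1)%N]).

(* t-interlacing for t = -s <= 0. *)
Definition interlaced_neg (s : nat) (lam mu : seq nat) : Prop :=
  (forall i, (1 <= i <= s)%N -> part1 lam i = part1 mu i) /\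
  (forall j, (1 <= j)%N ->
     [/\ (part1 mu (s + 2 * j).-1 >= part1 lam (s + j))%N,
         (part1 lam (s + j) >= part1 mu (s + 2 * j))%N &
         (part1 mu (s + 2 * j) >= part1 mu (s + 2 * j).+1)%N]).

Definition interlaced (t : int) (lam mu : seq nat) : Prop :=
  match t with
  | Posz n => interlaced_pos n lam mu
  | Negz n => interlaced_neg n.+1 lam mu
  end.

(* diff(mu, lam) as a zero-padded sequence, 0-based index i (entry i+1). *)
Definition diff_pos (n : nat) (mu lam : seq nat) (i : nat) : nat :=
  if (i < n)%N then part1 mu i.+1
  else let j := (i - n).+1 in
       (part1 mu (n + 2 * j).-1 + part1 mu (n + 2 * j) - part1 lam j)%N.

Definition diff_neg (s : nat) (mu lam : seq nat) (i : nat) : nat :=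
  let j := i.+1 in
  (part1 mu (s + 2 * j).-1 + part1 mu (s + 2 * j) - part1 lam (s + j))%N.

Definition diff (t : int) (mu lam : seq nat) : nat -> nat :=
  match t with
  | Posz n => diff_pos n mu lam
  | Negz n => diff_neg n.+1 mu lam
  end.

From mathcomp Require Import all_boot all_order all_algebra.
From mathcomp Require Import zify.

Set Implicit Arguments.
Unset Strict Implicit.
Unset Printing Implicit Defensive.

Import GRing.Theory.

(* The Jordan type lam of a nilpotent N is determined by the ranks
   rank N^c = excess c lam, the sum of the (lam_i - c)_+.  Exactness and
   N-equivariance of 0 -> P -> B -> R -> 0 give
   rank NP^c + rank NR^c <= rank NB^c, i.e. excess c lam + excess c nu <=
   excess c mu for every c.  Any sequence satisfies
   nu_1 + ... + nu_a <= a c + excess c nu, with equality for a partition mu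
   at c = mu_a; hence (nu_1 + ... + nu_a) + (lam_1 + ... + lam_b) <=
   mu_1 + ... + mu_(a+b), and likewise for lam + nu.  Under t-interlacing the
   partial sums of diff(mu, lam) telescope to partial sums of mu minus partial
   sums of lam, so this inequality says nu <= diff(mu, lam) in dominance
   order, which rules out diff(mu, lam) < nu. *)

Definition excess (c : nat) (s : seq nat) : nat := sumn [seq y - c | y <- s].

Definition psum (x : nat -> nat) (m : nat) : nat := \sum_(i < m) x i.

Lemma psum0 x : psum x 0 = 0.
Proof. exact: big_ord0. Qed.

Lemma psumS x m : psum x m.+1 = psum x m + x m.
Proof. by rewrite /psum big_ord_recr. Qed.

Lemma psum_parts_cons y s m : psum (parts (y :: s)) m.+1 = y + psum (parts s) m.
Proof. by rewrite /psum big_ord_recl. Qed.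

Lemma excess_cat c s1 s2 : excess c (s1 ++ s2) = excess c s1 + excess c s2.
Proof. by rewrite /excess map_cat sumn_cat. Qed.

Lemma excess_part_union c lam nu :
  excess c (part_union lam nu) = excess c lam + excess c nu.
Proof. by rewrite -excess_cat; apply/perm_sumn/perm_map; rewrite perm_sort. Qed.

Lemma excess_eq0 c s : all (fun y => y <= c) s -> excess c s = 0.
Proof. by elim: s => //= y s IH /andP[yc /IH]; rewrite /excess /=; lia. Qed.

Lemma psum_parts_nil m : psum (parts [::]) m = 0.
Proof. by rewrite /psum big1 // => i; rewrite /parts nth_nil. Qed.

Lemma psum_parts_le s a c : psum (parts s) a <= a * c + excess c s.
Proof.
elim: s a => [|y s IH] [|a]; rewrite ?psum0 ?psum_parts_nil ?psum_parts_cons //.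
by rewrite mulSn /excess /=; have := IH a; rewrite /excess; lia.
Qed.

Lemma psum_parts_sorted s a : sorted geq s ->
  psum (parts s) a = a * nth 0 s a + excess (nth 0 s a) s.
Proof.
elim: s a => [|y s IH] a; first by rewrite psum_parts_nil nth_nil muln0.
move=> ys; have s_sorted := path_sorted ys.
have s_le_y : all (fun z => z <= y) s.
  exact: order_path_min (fun _ _ _ h1 h2 => leq_trans h2 h1) ys.
case: a => [|a] /=; first by rewrite psum0 /excess /= subnn -/(excess y s) excess_eq0.
have sa_le_y : nth 0 s a <= y.
  by case: (ltnP a (size s)) => [/(mem_nth 0)/(allP s_le_y)//|/(nth_default 0)->].
by rewrite psum_parts_cons IH // mulSn {2}/excess /= -/(excess _ s); lia.
Qed.

Lemma dominated_antisym (x y : nat -> nat) : dominated x y -> dominated y x -> x =1 y.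
Proof.
move=> xy yx i; have := xy i.+1; have := yx i.+1; have := xy i; have := yx i.
rewrite -!/(psum _ _) !psumS; lia.
Qed.

Lemma psum_telescope (x y z : nat -> nat) u v :
  psum x u + psum y v = psum z (u + v) ->
  (forall j, x (u + j) + y (v + j) = z (u + v + 2 * j) + z (u + v + 2 * j).+1) ->
  forall j, psum x (u + j) + psum y (v + j) = psum z (u + v + 2 * j).
Proof.
move=> base step; elim=> [|j IH]; first by rewrite !addn0.
have -> : u + v + 2 * j.+1 = (u + v + 2 * j).+2 by lia.
by rewrite !addnS !psumS; have := step j; lia.
Qed.

Section Interlacing.
Variables lam mu : seq nat.

Lemma interlaced_pos_step n j : interlaced_pos n lam mu ->
  diff_pos n mu lam (n + j) + parts lam j =
  parts mu (n + 2 * j) + parts mu (n + 2 * j).+1.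
Proof.
case=> _ /(_ j.+1 isT) [+ _ _]; rewrite /diff_pos /part1 /parts ltnNge leq_addr addKn.
have -> : n + 2 * j.+1 = (n + 2 * j).+2 by lia.
rewrite /=; lia.
Qed.

Lemma interlaced_neg_step s j : interlaced_neg s lam mu ->
  diff_neg s mu lam j + parts lam (s + j) =
  parts mu (s + 2 * j) + parts mu (s + 2 * j).+1.
Proof.
case=> _ /(_ j.+1 isT) [+ _ _]; rewrite /diff_neg /part1 /parts addnS.
have -> : s + 2 * j.+1 = (s + 2 * j).+2 by lia.
rewrite /=; lia.
Qed.

Lemma interlaced_neg_prefix s : interlaced_neg s lam mu ->
  psum (parts lam) s = psum (parts mu) s.
Proof.
case=> eq_prefix _; apply: eq_bigr => i _.
by have := eq_prefix i.+1; rewrite /part1 /parts /=; apply.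
Qed.

End Interlacing.

Section Dominance.
Variables lam mu nu : seq nat.
Hypothesis mu_sorted : sorted geq mu.
Hypothesis excess_le : forall c, excess c lam + excess c nu <= excess c mu.

Lemma psum_parts_add_le a b :
  psum (parts nu) a + psum (parts lam) b <= psum (parts mu) (a + b).
Proof.
rewrite [psum (parts mu) _]psum_parts_sorted //; set c := nth 0 mu (a + b).
have := psum_parts_le nu a c; have := psum_parts_le lam b c; have := excess_le c.
rewrite mulnDl; lia.
Qed.

Lemma part_union_dominated : dominated (parts (part_union lam nu)) (parts mu).
Proof.
move=> k; rewrite -!/(psum _ _) [psum (parts mu) _]psum_parts_sorted //.
set c := nth 0 mu k.
have := psum_parts_le (part_union lam nu) k c; have := excess_le c.
rewrite excess_part_union; lia.
Qed.

Lemma dominated_of_telescope d u v :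
  (forall m, m < u -> psum d m = psum (parts mu) m) ->
  (forall j, psum d (u + j) + psum (parts lam) (v + j) =
             psum (parts mu) (u + v + 2 * j)) ->
  dominated (parts nu) d.
Proof.
move=> prefix tele k; rewrite -!/(psum _ _).
case: (ltnP k u) => [ku | /subnKC <-].
  by rewrite prefix //; have := psum_parts_add_le k 0; rewrite psum0 !addn0.
have := psum_parts_add_le (u + (k - u)) (v + (k - u)); have := tele (k - u).
have -> : u + (k - u) + (v + (k - u)) = u + v + 2 * (k - u) by lia.
lia.
Qed.

Lemma interlaced_dominated t :
  interlaced t lam mu -> dominated (parts nu) (diff t mu lam).
Proof.
case: t => n /= lam_mu.
- have prefix m : m <= n -> psum (diff_pos n mu lam) m = psum (parts mu) m.
    by move=> mn; apply: eq_bigr => i _; rewrite /diff_pos (leq_trans (ltn_ord i) mn).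
  apply: (@dominated_of_telescope _ n 0) => [m /ltnW|]; first exact: prefix.
  apply: psum_telescope => [|j].
    by rewrite psum0 !addn0 prefix.
  by rewrite !addn0 add0n (interlaced_pos_step _ lam_mu).
- apply: (@dominated_of_telescope _ 0 n.+1) => //.
  apply: psum_telescope => [|j].
    by rewrite psum0 (interlaced_neg_prefix lam_mu).
  by rewrite add0n (interlaced_neg_step _ lam_mu).
Qed.

End Dominance.

(* psums 0 s lists the ends of the Jordan blocks of jordan_nil K n s, so
   unbroken (psums 0 s) i j says that positions i..j lie in a single block. *)
Definition unbroken (ps : seq nat) (i j : nat) : bool := ~~ has (fun q => i < q <= j) ps.

Lemma unbroken_refl ps i : unbroken ps i i.
Proof.
by rewrite /unbroken (eq_has (a2 := pred0)) ?has_pred0 // => q /=; case: ltnP.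
Qed.

Lemma unbrokenS ps i j : i <= j ->
  unbroken ps i j.+1 = unbroken ps i j && (j.+1 \notin ps).
Proof.
move=> ij; rewrite /unbroken -negb_or -has_pred1 -has_predU.
by congr (~~ _); apply: eq_has => q /=; case: eqP => [->|]; lia.
Qed.

Lemma count_iota_add_lt acc x k :
  count (fun i => i + k < acc + x) (iota acc x) = x - k.
Proof.
rewrite -[in iota _ x](subnKC (leq_subr k x)) iotaD count_cat.
rewrite (eq_in_count (a2 := predT)) => [|i]; last by rewrite mem_iota /=; lia.
rewrite count_predT size_iota (eq_in_count (a2 := pred0)) => [|i];
  last by rewrite mem_iota /=; lia.
by rewrite count_pred0 addn0.
Qed.

Lemma psums_ge acc s q : q \in psums acc s -> acc <= q.
Proof. by elim: s acc => //= x s IH acc; rewrite in_cons => /orP[/eqP ->|/IH]; lia. Qed.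

Lemma count_unbroken k s acc :
  count (fun i => unbroken (psums acc s) i (i + k) && (i + k < acc + sumn s))
        (iota acc (sumn s)) = excess k s.
Proof.
elim: s acc => [|x s IH] acc //=.
rewrite iotaD count_cat /excess /= -/(excess k s) -(IH (acc + x)) addnA.
congr addn.
  rewrite -(count_iota_add_lt acc x k); apply: eq_in_count => i.
  rewrite mem_iota /=; case: (ltnP (i + k) (acc + x)) => [ik _|ik /andP[_ ix]].
    rewrite /unbroken /= negb_or (ltn_addr (sumn s) ik) [acc + x <= _]leqNgt ik.
    by rewrite andbF andbT /=; apply/hasPn => q /psums_ge; lia.
  by rewrite /unbroken /= ix ik.
apply: eq_in_count => i; rewrite mem_iota => /andP[xi _] /=.
by rewrite /unbroken /= ltnNge xi.
Qed.

Section Rank.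
Variable K : fieldType.
Local Open Scope ring_scope.

Lemma intertwine_exp m n (A : 'M[K]_m) (B : 'M[K]_n) (X : 'M[K]_(m, n)) k :
  A *m X = X *m B -> A ^+ k *m X = X *m B ^+ k.
Proof.
move=> AX; elim: k => [|k IH]; first by rewrite !expr0 mul1mx mulmx1.
by rewrite !exprSr -!mulmxE -mulmxA AX mulmxA IH mulmxA.
Qed.

Lemma mxrank_short_exact p b r (NP : 'M[K]_p) (NB : 'M[K]_b) (NR : 'M[K]_r)
    (f : 'M[K]_(p, b)) (g : 'M[K]_(b, r)) :
  NP *m f = f *m NB -> NB *m g = g *m NR ->
  row_free f -> row_full g -> (f <= kermx g)%MS ->
  (\rank NP + \rank NR <= \rank NB)%N.
Proof.
move=> NPf NBg f_free g_full f_ker.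
rewrite -(mxrank_mul_ker NB g) addnC NBg (eqmxMfull _ g_full) leq_add2l.
rewrite -(mxrankMfree _ f_free) NPf; apply: mxrankS.
rewrite sub_capmx submxMl sub_kermx -mulmxA NBg mulmxA.
by move: f_ker; rewrite sub_kermx => /eqP ->; rewrite mul0mx eqxx.
Qed.

Lemma mxrank_partial_perm m n (P : pred 'I_m) (h : 'I_m -> 'I_n) (A : 'M[K]_(m, n)) :
  {in P &, injective h} ->
  (forall i, row i A = if P i then delta_mx 0 (h i) else 0) ->
  \rank A = #|P|.
Proof.
move=> h_inj rowA.
have -> : \rank A = \rank (\sum_(i | P i) <<delta_mx 0 (h i) : 'rV[K]_n>>)%MS.
  apply/eqmx_rank/andP; split.
    apply/row_subP => i; rewrite rowA; case: ifP => Pi; last exact: sub0mx.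
    by rewrite (sumsmx_sup i) ?genmxE.
  apply/sumsmx_subP => i Pi; rewrite genmxE.
  by have := row_sub i A; rewrite rowA Pi.
rewrite (mxdirectP (mxdirect_delta _ h_inj)) /= -sum1_card.
by apply: eq_bigr => i _; rewrite mxrank_gen mxrank_delta.
Qed.

Lemma card_ord_count n (Q : pred nat) : #|[pred i : 'I_n | Q i]| = count Q (iota 0 n).
Proof.
by rewrite -sum1_card -(big_mkord Q (fun _ => 1%N)) sum1_count /index_iota subn0.
Qed.

Lemma jordan_nil_exp n s k :
  jordan_nil K n s ^+ k =
  \matrix_(i, j) ((((j : nat) == i + k) && unbroken (psums 0 s) i (i + k))%N)%:R.
Proof.
elim: k => [|k IH].
  by apply/matrixP => i j; rewrite !mxE addn0 unbroken_refl andbT eq_sym.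
rewrite exprSr IH -mulmxE; apply/matrixP => i j; rewrite !mxE.
case: (ltnP (i + k) n) => [ikn|nik]; last first.
  rewrite big1 => [|l _]; last first.
    rewrite !mxE (_ : (l : nat) == (i + k)%N = false) ?mul0r //.
    by have := ltn_ord l; lia.
  by rewrite (_ : (j : nat) == (i + k.+1)%N = false) //; have := ltn_ord j; lia.
rewrite (bigD1 (Ordinal ikn)) //= big1 ?addr0 => [|l l_ne]; last first.
  rewrite !mxE (_ : (l : nat) == (i + k)%N = false) ?mul0r //.
  by apply: contraNF l_ne => /eqP l_ik; apply/eqP/val_inj.
rewrite !mxE /= eqxx addnS (unbrokenS _ (leq_addr k i)).
by case: eqP => [->|_]; case: unbroken; rewrite /= ?mul1r ?mul0r ?mulr0.
Qed.

Lemma row_jordan_nil_exp n s k i :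
  row i (jordan_nil K n s ^+ k) =
  if (unbroken (psums 0 s) i (i + k) && (i + k < n))%N
  then delta_mx 0 (insubd i (i + k)%N) else 0.
Proof.
apply/rowP => j; rewrite jordan_nil_exp !mxE.
case: ifP => [/andP[-> ikn]|]; rewrite !mxE.
  by rewrite eqxx -(inj_eq val_inj) val_insubd ikn andbT eq_sym.
case: unbroken; rewrite ?andbF ?andbT //= => nik.
by rewrite (_ : (j : nat) == (i + k)%N = false) //; have := ltn_ord j; lia.
Qed.

Lemma mxrank_jordan_nil_exp n s k : sumn s = n ->
  \rank (jordan_nil K n s ^+ k) = excess k s.
Proof.
move=> <-; rewrite -(count_unbroken k s 0) -card_ord_count.
apply: (mxrank_partial_perm (h := fun i => insubd i (i + k)%N));
  last exact: row_jordan_nil_exp.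
move=> i1 i2 /andP[_ ik1] /andP[_ ik2] /(congr1 val).
by rewrite !val_insubd ik1 ik2 => /addIn /val_inj.
Qed.

Lemma mxrank_exp_jordan_type n (N : 'M[K]_n) lam k :
  jordan_type N lam -> \rank (N ^+ k) = excess k lam.
Proof.
case=> _ [lam_n [S [S_unit SNS]]].
have SNk : jordan_nil K n lam ^+ k *m S = S *m N ^+ k.
  by apply: intertwine_exp; rewrite -SNS mulmxKV.
have S_free : row_free S by rewrite row_free_unit.
have S_full : row_full S by rewrite row_full_unit.
rewrite -(mxrank_jordan_nil_exp k lam_n) -[RHS](mxrankMfree _ S_free) SNk.
by rewrite (eqmxMfull _ S_full).
Qed.

End Rank.

Local Open Scope ring_scope.

Theorem lemma3p6 (K : fieldType) (p b r : nat)
  (NP : 'M[K]_p) (NB : 'M[K]_b) (NR : 'M[K]_r)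
  (f : 'M[K]_(p, b)) (g : 'M[K]_(b, r)) (lam mu nu : seq nat) :
  nilpotent_mx NP -> nilpotent_mx NB -> nilpotent_mx NR ->
  NP *m f = f *m NB -> NB *m g = g *m NR ->
  row_free f -> row_full g -> (f == kermx g)%MS ->
  jordan_type NP lam -> jordan_type NB mu -> jordan_type NR nu ->
  dominated (parts (part_union lam nu)) (parts mu) /\
  (forall t : int, interlaced t lam mu ->
     ~ strictly_dominated (diff t mu lam) (parts nu)).
Proof.
move=> _ _ _ NPf NBg f_free g_full /andP[f_ker _] jP jB jR.
have excess_le c : (excess c lam + excess c nu <= excess c mu)%N.
  rewrite -(mxrank_exp_jordan_type c jP) -(mxrank_exp_jordan_type c jB).
  rewrite -(mxrank_exp_jordan_type c jR).
  by apply: mxrank_short_exact f_free g_full f_ker; apply: intertwine_exp.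
have mu_sorted : sorted geq mu by case: jB => /andP[].
split; first exact: part_union_dominated mu_sorted excess_le.
move=> t lam_mu [diff_nu [i /eqP]]; apply.
exact: dominated_antisym diff_nu (interlaced_dominated mu_sorted excess_le lam_mu) i.
Qed.
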